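(* For positive integers $p,q$, the transition functions satisfy: (1) $\tau^p_q(n+p)=\tau^p_q(n)+q$ for each $n\in\mathbb{N}$; (2) $\tau^p_q$ is order-preserving; (3) $\tau^q_p\circ\tau^p_q\le\mathrm{id}_{\mathbb{N}}$ (pointwise); (4) $\tau^q_p\circ\tau^p_q=\mathrm{id}_{\mathbb{N}}$ if $p\le q$; (5) $(\tau^p_q)^{-1}(0)=\{0\}$ if either $p=q=1$ or $p,q\ge 2$.
   Context: $\mathbb{N}=\{0,1,2,\dots\}$. For positive integers $p,q$, the transition function $\tau^p_q:\mathbb{N}\to\mathbb{N}$ is defined by $\tau^p_q(mp+n)=mq+\min\{n,q-1\}$ for $m\in\mathbb{N}$ and $0\le n<p$. *)

From mathcomp Require Import all_boot.
Set Implicit Arguments. Unset Strict Implicit. Unset Printing Implicit Defensive.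

Definition tau (p q : nat) (x : nat) : nat :=
  (x %/ p) * q + minn (x %% p) q.-1.

From mathcomp Require Import all_boot.
From mathcomp Require Import zify.

(* Write [n = m p + r] with [r < p]: [tau p q] keeps the block index [m] and
   clamps the offset [r] to [q - 1]. Going back with [tau q p] restores [m]
   and clamps once more, so it loses nothing when [p <= q]. *)

Lemma tauE p q m r : r < p -> tau p q (m * p + r) = m * q + minn r q.-1.
Proof.
move=> lt_rp; have p_gt0 : 0 < p by case: p lt_rp.
by rewrite /tau divnMDl // modnMDl divn_small // modn_small // addn0.
Qed.

Section Transition.

Variables p q : nat.
Hypotheses (p_gt0 : 0 < p) (q_gt0 : 0 < q).

Lemma tau_addn n : tau p q (n + p) = tau p q n + q.
Proof.
rewrite /tau divnDr ?dvdnn // divnn p_gt0 modnDr mulnDl mul1n.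
by rewrite addnAC.
Qed.

Lemma tau_homo : {homo tau p q : x y / x <= y}.
Proof.
move=> x y le_xy; rewrite /tau.
have [lt_xy|] := ltnP (x %/ p) (y %/ p).
  have : (x %/ p).+1 * q <= y %/ p * q by rewrite leq_mul2r lt_xy orbT.
  rewrite mulSn; lia.
rewrite leq_eqVlt ltnNge leq_div2r // orbF => /eqP eq_div.
have := divn_eq x p; have := divn_eq y p.
rewrite eq_div; lia.
Qed.

Lemma tau_tauE n : tau q p (tau p q n) = n %/ p * p + minn (n %% p) q.-1.
Proof.
have lt_min_q : minn (n %% p) q.-1 < q by lia.
rewrite [tau p q n]/tau tauE //; congr (_ + _); apply/minn_idPl.
by rewrite -ltnS prednK // (leq_ltn_trans (geq_minl _ _)) ?ltn_pmod.
Qed.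

Lemma tauK_le n : tau q p (tau p q n) <= n.
Proof. by rewrite tau_tauE {3}(divn_eq n p) leq_add2l geq_minl. Qed.

Lemma tauK : p <= q -> cancel (tau p q) (tau q p).
Proof.
move=> le_pq n; rewrite tau_tauE {3}(divn_eq n p); congr (_ + _).
by apply/minn_idPl; rewrite -ltnS prednK // (leq_trans (ltn_pmod n p_gt0)).
Qed.

Lemma tau_eq0 n : (tau p q n == 0) = (n < p) && (minn n q.-1 == 0).
Proof.
rewrite /tau addn_eq0 muln_eq0 (gtn_eqF q_gt0) orbF.
case: ltnP => [lt_np | le_pn]; first by rewrite divn_small ?modn_small.
by rewrite eqn0Ngt divn_gt0 ?le_pn.
Qed.

End Transition.

Theorem proposition2p3 (p q : nat) (hp : 0 < p) (hq : 0 < q) :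
  (forall n : nat, tau p q (n + p) = tau p q n + q) /\
  {homo tau p q : x y / x <= y} /\
  (forall n : nat, tau q p (tau p q n) <= n) /\
  (p <= q -> forall n : nat, tau q p (tau p q n) = n) /\
  ((p = 1 /\ q = 1) \/ (2 <= p /\ 2 <= q) ->
     forall n : nat, tau p q n = 0 <-> n = 0).
Proof.
split; first exact: tau_addn.
split; first exact: tau_homo.
split; first exact: tauK_le.
split; first exact: tauK.
move=> pq_cases n; split=> [/eqP|->]; last by rewrite /tau div0n mod0n min0n.
rewrite tau_eq0 // => /andP[lt_np min_eq0].
case: pq_cases => [[p1 _] | [_ q_ge2]]; first by move: lt_np; rewrite p1; lia.
by move: min_eq0; lia.
Qed.
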